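(* Fix a horizon $T\in\mathbb{N}$, demands $D_1,\dots,D_T\in\mathbb{R}$, prices $\lambda_1,\dots,\lambda_T\ge 0$, a degradation cost $c\ge 0$, power limit $\overline{P}>0$, energy limits $0\le \underline{E}\le \overline{E}$, efficiency $\eta\in(0,1]$ and an initial state of charge $e_1\in[\underline{E},\overline{E}]$. Let $S$ denote the set of $(p,d,q,e)$ with $p\in\mathbb{R}$, $d,q\in\mathbb{R}^T$, $e=(e_2,\dots,e_{T+1})\in\mathbb{R}^T$ satisfying, for all $t=1,\dots,T$: $$p\ge D_t-d_t+q_t,\qquad e_{t+1}=e_t-d_t/\eta+\eta q_t,\qquad 0\le d_t,q_t\le \overline{P},\qquad \underline{E}\le e_{t+1}\le \overline{E},$$ and assume $S\neq\emptyset$. Combined problem: for a peak-demand charge $\kappa>0$, $$\min_{(p,d,q,e)\in S}\ \sum_{t=1}^T\big[c\,d_t+\lambda_t(D_t-d_t+q_t)\big]+\kappa p.$$ Stage 1 (peak shaving): for $\delta>0$, $$\min_{(p,d,q,e)\in S}\ p+\delta\sum_{t=1}^T e_{t+1},$$ with an optimal solution $(p^*,d^*,q^*,e^* )$. Stage 2 (arbitrage): given $(p^*,e^* )$, $$\min_{d,q,e}\ \sum_{t=1}^T\big[c\,d_t-\lambda_t(d_t-q_t)\big]$$ subject to $p^*\ge D_t-d_t+q_t$, $e_{t+1}\ge e^*_{t+1}$, $e_{t+1}=e_t-d_t/\eta+\eta q_t$, $0\le d_t,q_t\le\overline{P}$, $\underline{E}\le e_{t+1}\le\overline{E}$ for all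 $t=1,\dots,T$. Claim: if $\delta>0$ is sufficiently small and $\kappa$ is sufficiently large relative to $c$ and the $\lambda_t$, then solving Stage 1 followed by Stage 2 is equivalent to solving the combined problem; that is, the optimal peak of the combined problem equals $p^*$, and for any optimal solution $(d,q,e)$ of Stage 2, the point $(p^*,d,q,e)$ is an optimal solution of the combined problem, with combined optimal value equal to $\sum_{t=1}^T\lambda_tD_t+\kappa p^*+(\text{optimal value of Stage 2})$.
   Context: This models a behind-the-meter battery in a building: $d_t$ and $q_t$ are the discharge and charge energy in timestep $t$, $e_{t+1}$ is the state of charge after timestep $t$, $p$ is the peak net demand over the horizon, $D_t-d_t+q_t$ is the net demand in timestep $t$, $\kappa$ is the peak demand charge, $\lambda_t$ the real-time energy price and $c$ the per-unit battery degradation cost. The term $\delta\sum_t e_{t+1}$ in Stage 1 is a small tie-breaking term selecting a low state-of-charge trajectory among peak-minimizing solutions. *)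

From HB Require Import structures.
From mathcomp Require Import all_boot all_order all_algebra.
From mathcomp Require Import reals.
Set Implicit Arguments. Unset Strict Implicit. Unset Printing Implicit Defensive.
Import Order.TTheory GRing.Theory Num.Theory.
Local Open Scope ring_scope.

Section Battery.
Variable R : realType.
Variable T : nat.
(* Timestep t = 1..T is represented by t : 'I_T (0-based). A trajectory
   e : 'I_T -> R stores e_{t+1} at index t (i.e. e_2, ..., e_{T+1}). *)
Variables (D lam : 'I_T -> R) (c Pbar Emin Emax eta e1 : R).

Definition prev_soc (e : 'I_T -> R) (t : 'I_T) : R :=
  match val t with
  | 0 => e1
  | k.+1 => match @insub nat (fun n => n < T)%N 'I_T k with
            | Some i => e i
            | None => e1
            end
  end.

Definition feasible (p : R) (d q e : 'I_T -> R) : Prop :=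
  forall t : 'I_T,
    [/\ D t - d t + q t <= p,
        e t = prev_soc e t - d t / eta + eta * q t,
        0 <= d t <= Pbar,
        0 <= q t <= Pbar &
        Emin <= e t <= Emax].

Definition combined_obj (kappa p : R) (d q : 'I_T -> R) : R :=
  \sum_(t < T) (c * d t + lam t * (D t - d t + q t)) + kappa * p.

Definition combined_opt (kappa p : R) (d q e : 'I_T -> R) : Prop :=
  feasible p d q e /\
  forall p' d' q' e', feasible p' d' q' e' ->
    combined_obj kappa p d q <= combined_obj kappa p' d' q'.

Definition stage1_obj (delta p : R) (e : 'I_T -> R) : R :=
  p + delta * \sum_(t < T) e t.

Definition stage1_opt (delta p : R) (d q e : 'I_T -> R) : Prop :=
  feasible p d q e /\
  forall p' d' q' e', feasible p' d' q' e' ->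
    stage1_obj delta p e <= stage1_obj delta p' e'.

Definition stage2_obj (d q : 'I_T -> R) : R :=
  \sum_(t < T) (c * d t - lam t * (d t - q t)).

Definition stage2_feasible (pstar : R) (estar : 'I_T -> R) (d q e : 'I_T -> R)
  : Prop :=
  feasible pstar d q e /\ forall t : 'I_T, estar t <= e t.

Definition stage2_opt (pstar : R) (estar : 'I_T -> R) (d q e : 'I_T -> R)
  : Prop :=
  stage2_feasible pstar estar d q e /\
  forall d' q' e', stage2_feasible pstar estar d' q' e' ->
    stage2_obj d q <= stage2_obj d' q'.

End Battery.

From HB Require Import structures.
From mathcomp Require Import all_boot all_order all_algebra.
From mathcomp Require Import reals ring lra.
Set Implicit Arguments. Unset Strict Implicit. Unset Printing Implicit Defensive.
Import Order.TTheory GRing.Theory Num.Theory.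
Local Open Scope ring_scope.

(* The optimal arbitrage cost is Lipschitz in the peak: a schedule with peak p
   can be turned into one with any smaller feasible peak p0 whose arbitrage cost
   grows by at most [cost_lip * (p - p0)] and whose total state of charge grows
   by at most [soc_lip * (p - p0)].  To build it, every step is first shaved to
   peak p0 by discharging more; the resulting trajectory is clamped between a
   trajectory feasible at p0 and itself shifted up, which restores the energy
   limits; finally each step is re-selected close to the shaved one by a
   Hoffman-type bound on the polytope of admissible steps.
   Hence for [delta * soc_lip < 1] Stage 1 attains the least feasible peak, and
   since pointwise minima of feasible trajectories are feasible, its e* is the
   pointwise least trajectory at that peak, so the Stage 2 constraint e >= e*
   excludes nothing.  For [kappa > cost_lip] lowering the peak always pays off
   in the combined problem. *)

Section MinMax.
Variable R : realFieldType.
Implicit Types a f m s x : R.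

Definition clamp a f s := Num.max (Num.min a (f + s)) f.

Lemma clamp_ge a f s : f <= clamp a f s.
Proof. by rewrite le_max lexx orbT. Qed.

Lemma clamp_le a f s : 0 <= s -> clamp a f s <= f + s.
Proof. by move=> s0; rewrite ge_max ge_min lexx orbT /= lerDl. Qed.

Lemma clamp_lb m a f s : m <= a -> m <= f + s -> m <= clamp a f s.
Proof. by move=> ma mf; rewrite le_max le_min ma mf. Qed.

Lemma clamp_ub m a f s : a <= m -> f <= m -> clamp a f s <= m.
Proof. by move=> am fm; rewrite ge_max ge_min am. Qed.

Lemma clampxx f s : 0 <= s -> clamp f f s = f.
Proof. by move=> s0; rewrite /clamp (min_l (_ : f <= f + s)) ?maxxx // lerDl. Qed.

Lemma clamp_sub_between a a' f f' s :
  Num.min (a - a') (f - f') <= clamp a f s - clamp a' f' s <= Num.max (a - a') (f - f').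
Proof.
rewrite /clamp.
case: (leP (Num.min a (f + s)) f); case: (leP (Num.min a' (f' + s)) f');
case: (leP a (f + s)); case: (leP a' (f' + s));
case: (leP (a - a') (f - f')) => *; apply/andP; split; lra.
Qed.

Lemma clamp_sub_near a a' f f' s : 0 <= s ->
  `|(clamp a f s - clamp a' f' s) - (f - f')| <= s.
Proof.
move=> s0; have := clamp_ge a f s; have := clamp_le a f s0.
have := clamp_ge a' f' s; have := clamp_le a' f' s0.
by move=> *; rewrite ler_norml; apply/andP; split; lra.
Qed.

Lemma subr_min_between a a' b b' :
  Num.min (a - b) (a' - b') <= Num.min a a' - Num.min b b' <= Num.max (a - b) (a' - b').
Proof.
by case: (leP a a'); case: (leP b b'); case: (leP (a - b) (a' - b')) => *;
  apply/andP; split; lra.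
Qed.

Lemma between_convex x a b : Num.min a b <= x <= Num.max a b ->
  exists2 th, 0 <= th <= 1 & x = th * a + (1 - th) * b.
Proof.
case: (ltgtP a b) => [ab|ba|<-] /andP[xa xb].
- have ba0 : 0 < b - a by rewrite subr_gt0.
  exists ((b - x) / (b - a)); last by field; rewrite gt_eqF.
  by rewrite divr_ge0 ?ler_pdivrMr //= ?mul1r; lra.
- have ab0 : 0 < a - b by rewrite subr_gt0.
  exists ((x - b) / (a - b)); last by field; rewrite gt_eqF.
  by rewrite divr_ge0 ?ler_pdivrMr //= ?mul1r; lra.
- exists 0; first by rewrite lexx ler01.
  by rewrite mul0r add0r subr0 mul1r; apply/eqP; rewrite eq_le xa xb.
Qed.

End MinMax.

Section Step.
Variables (R : realFieldType) (P al be c : R).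

(* A step is a pair u = (discharge, charge); for al = eta^-1 and be = eta,
   [wdiff u] is the resulting drop of the state of charge. *)
Definition admissible (dem p : R) (u : R * R) :=
  [/\ 0 <= u.1 <= P, 0 <= u.2 <= P & dem - u.1 + u.2 <= p].

Definition wdiff (u : R * R) := al * u.1 - be * u.2.

Definition l1dist (u v : R * R) := `|u.1 - v.1| + `|u.2 - v.2|.

Definition cost (l : R) (u : R * R) := c * u.1 - l * (u.1 - u.2).

Lemma l1dist_le u v a b : `|u.1 - v.1| <= a -> `|u.2 - v.2| <= b -> l1dist u v <= a + b.
Proof. exact: lerD. Qed.

Lemma cost_lipschitz l u v : 0 <= c -> 0 <= l ->
  cost l u <= cost l v + (c + l) * l1dist u v.
Proof.
case: u v => d q [d' q']; rewrite /cost /l1dist; cbn [fst snd] => c0 l0.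
have cd : c * (d - d') <= c * `|d - d'| := ler_wpM2l c0 (ler_norm _).
have ld : l * (d' - d) <= l * `|d - d'| by rewrite ler_wpM2l // distrC ler_norm.
have lq : l * (q - q') <= l * `|q - q'| := ler_wpM2l l0 (ler_norm _).
have cq : 0 <= c * `|q - q'| := mulr_ge0 c0 (normr_ge0 _).
lra.
Qed.

Lemma admissible_between dem p u1 u2 y : admissible dem p u1 -> admissible dem p u2 ->
  Num.min (wdiff u1) (wdiff u2) <= y <= Num.max (wdiff u1) (wdiff u2) ->
  exists2 u, admissible dem p u & wdiff u = y.
Proof.
move=> adm1 adm2 /between_convex[th /andP[th0 th1] ->].
exists (th * u1.1 + (1 - th) * u2.1, th * u1.2 + (1 - th) * u2.2).
  move: adm1 adm2; rewrite /admissible; cbn [fst snd].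
  move=> [/andP[d10 d1P] /andP[q10 q1P] peak1] [/andP[d20 d2P] /andP[q20 q2P] peak2].
  by split; try (apply/andP; split); nra.
by rewrite /wdiff /=; ring.
Qed.

Lemma wdiff_bounds dem p u : 0 < be -> be <= al -> admissible dem p u ->
  [/\ wdiff u <= al * P, - (be * P) <= wdiff u,
      be * (dem - p) <= wdiff u & al * (dem - p) <= wdiff u].
Proof.
case: u => d q; rewrite /admissible /wdiff; cbn [fst snd].
by move=> be_gt0 be_le_al [/andP[d0 dP] /andP[q0 qP] peak]; split; nra.
Qed.

(* For al = be the second summand is 0 (x / 0 = 0): the case that needs it,
   [reselect_along_peak], cannot occur then. *)
Definition lip := be^-1 + 2 * (al - be)^-1.

Lemma lip_ge0 : 0 < be -> be <= al -> 0 <= lip.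
Proof.
by move=> be_gt0 be_le_al; rewrite /lip addr_ge0 ?mulr_ge0 ?invr_ge0 ?subr_ge0 // ltW.
Qed.

Lemma le_lip_of_mul_be z x : 0 < be -> be <= al -> 0 <= x -> be * z <= x -> z <= lip * x.
Proof.
move=> be_gt0 be_le_al x0 bez; apply: (@le_trans _ _ (be^-1 * x)).
  have e : be * (be^-1 * x) = x by rewrite mulVKf ?gt_eqF.
  nra.
have : 0 <= 2 * (al - be)^-1 * x by rewrite !mulr_ge0 // invr_ge0 subr_ge0.
rewrite /lip mulrDl; lra.
Qed.

Lemma le_lip_of_mul_gap z x : 0 < be -> be < al -> 0 <= x -> (al - be) * z <= 2 * x ->
  z <= lip * x.
Proof.
move=> be_gt0 be_lt_al x0 abz; have ab_gt0 : 0 < al - be by rewrite subr_gt0.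
apply: (@le_trans _ _ (2 * (al - be)^-1 * x)).
  have e : (al - be) * ((al - be)^-1 * x) = x by rewrite mulVKf ?gt_eqF.
  nra.
have : 0 <= be^-1 * x by rewrite mulr_ge0 // invr_ge0 ltW.
rewrite /lip mulrDl; lra.
Qed.

Lemma reselect_up dem p u1 y : 0 < be -> be <= al -> admissible dem p u1 ->
  wdiff u1 <= y <= al * P ->
  exists2 u, admissible dem p u & wdiff u = y /\ l1dist u u1 <= lip * (y - wdiff u1).
Proof.
case: u1 => d1 q1; rewrite /admissible /wdiff; cbn [fst snd].
move=> be_gt0 be_le_al [/andP[d10 d1P] /andP[q10 q1P] peak1] /andP[lo hi].
have al_gt0 : 0 < al by exact: lt_le_trans be_le_al.
pose x := (y - (al * d1 - be * q1)) / al.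
have alx : al * x = y - (al * d1 - be * q1) by rewrite mulrC divfK ?gt_eqF.
have x0 : 0 <= x by nra.
have [fits|overflow] := leP (d1 + x) P.
- exists (d1 + x, q1); first by split => /=; try (apply/andP; split); nra.
  split; first by rewrite /wdiff /=; lra.
  apply: le_lip_of_mul_be => //; first by lra.
  have dist : l1dist (d1 + x, q1) (d1, q1) <= x + 0.
    by apply: l1dist_le; rewrite ler_norml /=; apply/andP; split; nra.
  nra.
pose w := (al * P - y) / be.
have bew : be * w = al * P - y by rewrite mulrC divfK ?gt_eqF.
exists (P, w); first by split => /=; try (apply/andP; split); nra.
split; first by rewrite /wdiff /=; lra.
apply: le_lip_of_mul_be => //; first by lra.
have dist : l1dist (P, w) (d1, q1) <= (P - d1) + (q1 - w).
  by apply: l1dist_le; rewrite ler_norml /=; apply/andP; split; nra.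
nra.
Qed.

Lemma reselect_less_discharge dem p u1 y : 0 < be -> be <= al -> admissible dem p u1 ->
  y <= wdiff u1 -> wdiff u1 - y <= al * u1.1 ->
  wdiff u1 - y <= al * (u1.1 - u1.2 - (dem - p)) ->
  exists2 u, admissible dem p u & wdiff u = y /\ l1dist u u1 <= lip * (wdiff u1 - y).
Proof.
case: u1 => d1 q1; rewrite /admissible /wdiff; cbn [fst snd].
move=> be_gt0 be_le_al [/andP[d10 d1P] /andP[q10 q1P] peak1] down gap_d gap_s.
have al_gt0 : 0 < al by exact: lt_le_trans be_le_al.
pose x := (al * d1 - be * q1 - y) / al.
have alx : al * x = al * d1 - be * q1 - y by rewrite mulrC divfK ?gt_eqF.
have x0 : 0 <= x by nra.
exists (d1 - x, q1); first by split => /=; try (apply/andP; split); nra.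
split; first by rewrite /wdiff /=; lra.
apply: le_lip_of_mul_be => //; first by lra.
have dist : l1dist (d1 - x, q1) (d1, q1) <= x + 0.
  by apply: l1dist_le; rewrite ler_norml /=; apply/andP; split; nra.
nra.
Qed.

Lemma reselect_pure_charge dem p u1 y : 0 < be -> be <= al -> admissible dem p u1 ->
  - (be * P) <= y -> be * (dem - p) <= y ->
  u1.1 <= u1.1 - u1.2 - (dem - p) -> al * u1.1 < wdiff u1 - y ->
  exists2 u, admissible dem p u & wdiff u = y /\ l1dist u u1 <= lip * (wdiff u1 - y).
Proof.
case: u1 => d1 q1; rewrite /admissible /wdiff; cbn [fst snd].
move=> be_gt0 be_le_al [/andP[d10 d1P] /andP[q10 q1P] peak1] yP ypeak slack_d gap_d.
pose w := - y / be.
have bew : be * w = - y by rewrite mulrC divfK ?gt_eqF.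
exists (0, w); first by split => /=; try (apply/andP; split); nra.
split; first by rewrite /wdiff /=; lra.
apply: le_lip_of_mul_be => //; first by nra.
have dist : l1dist (0, w) (d1, q1) <= d1 + (w - q1).
  by apply: l1dist_le; rewrite ler_norml /=; apply/andP; split; nra.
nra.
Qed.

Lemma reselect_along_peak dem p u1 y : 0 < be -> be <= al -> admissible dem p u1 ->
  al * (dem - p) <= y -> be * (dem - p) <= y ->
  u1.1 - u1.2 - (dem - p) < u1.1 -> al * (u1.1 - u1.2 - (dem - p)) < wdiff u1 - y ->
  exists2 u, admissible dem p u & wdiff u = y /\ l1dist u u1 <= lip * (wdiff u1 - y).
Proof.
case: u1 => d1 q1; rewrite /admissible /wdiff; cbn [fst snd].
move=> be_gt0 be_le_al [/andP[d10 d1P] /andP[q10 q1P] peak1] ypeak_al ypeak_be slack_d gap_s.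
have be_lt_al : be < al by nra.
have ab_gt0 : 0 < al - be by rewrite subr_gt0.
pose x := ((al - be) * q1 + al * (dem - p) - y) / (al - be).
have abx : (al - be) * x = (al - be) * q1 + al * (dem - p) - y by rewrite mulrC divfK ?gt_eqF.
exists (q1 + (dem - p) - x, q1 - x); first by split => /=; try (apply/andP; split); nra.
split; first by rewrite /wdiff /=; nra.
apply: le_lip_of_mul_gap => //; first by nra.
have dist : l1dist (q1 + (dem - p) - x, q1 - x) (d1, q1) <= (d1 - q1 - (dem - p) + x) + x.
  by apply: l1dist_le; rewrite ler_norml /=; apply/andP; split; nra.
nra.
Qed.

Lemma reselect_down dem p u1 u2 : 0 < be -> be <= al ->
  admissible dem p u1 -> admissible dem p u2 -> wdiff u2 <= wdiff u1 ->
  exists2 u, admissible dem p u &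
    wdiff u = wdiff u2 /\ l1dist u u1 <= lip * (wdiff u1 - wdiff u2).
Proof.
move=> be_gt0 be_le_al adm1 adm2 down.
have [_ yP ypeak_be ypeak_al] := wdiff_bounds be_gt0 be_le_al adm2.
have al_ge0 : 0 <= al by rewrite (le_trans (ltW be_gt0)).
have [slack_d|d_slack] := leP u1.1 (u1.1 - u1.2 - (dem - p)).
  have [gap_d|d_gap] := leP (wdiff u1 - wdiff u2) (al * u1.1).
    apply: reselect_less_discharge => //; apply: (le_trans gap_d).
    exact: ler_wpM2l.
  exact: reselect_pure_charge.
have [gap_s|s_gap] := leP (wdiff u1 - wdiff u2) (al * (u1.1 - u1.2 - (dem - p))).
  apply: reselect_less_discharge => //; apply: (le_trans gap_s).
  exact: ler_wpM2l (ltW d_slack).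
exact: reselect_along_peak.
Qed.

Lemma admissible_reselect dem p u1 u2 : 0 < be -> be <= al ->
  admissible dem p u1 -> admissible dem p u2 ->
  exists2 u, admissible dem p u &
    wdiff u = wdiff u2 /\ l1dist u u1 <= lip * `|wdiff u2 - wdiff u1|.
Proof.
move=> be_gt0 be_le_al adm1 adm2.
have [up|down] := leP (wdiff u1) (wdiff u2).
  rewrite ger0_norm ?subr_ge0 //; apply: reselect_up => //.
  by case: (wdiff_bounds be_gt0 be_le_al adm2) => hi _ _ _; rewrite up hi.
rewrite ler0_norm ?subr_le0 ?ltW // opprB; exact: reselect_down (ltW down).
Qed.

End Step.

Section Shave.
Variables (R : realFieldType) (P eta c : R).
Local Notation drop := (wdiff eta^-1 eta).

Lemma eta_le_inv : 0 < eta -> eta <= 1 -> eta <= eta^-1.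
Proof.
move=> eta_gt0 eta_le1; have etaV : eta * eta^-1 = 1 by rewrite mulfV ?gt_eqF.
have : 0 < eta^-1 by rewrite invr_gt0.
nra.
Qed.

Lemma shave_step l dem p p0 u : 0 < eta -> eta <= 1 -> 0 <= c -> 0 <= l ->
  p0 <= p -> dem - P <= p0 -> admissible P dem p u ->
  exists2 u', admissible P dem p0 u' &
    drop u <= drop u' <= drop u + (p - p0) / eta /\ cost c l u' <= cost c l u + c * (p - p0).
Proof.
move=> eta_gt0 eta_le1 c0 l0 pp0 demP; have eta_inv := eta_le_inv eta_gt0 eta_le1.
case: u => d q; rewrite /admissible /wdiff /cost; cbn [fst snd].
move=> [/andP[d0 dP] /andP[q0 qP] peak].
have etaV : eta * eta^-1 = 1 by rewrite mulfV ?gt_eqF.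
move needE : (dem - d + q - p0) => need.
have [met|unmet] := leP need 0.
  exists (d, q); first by split => /=; try (apply/andP; split); lra.
  by split; [apply/andP; split|]; rewrite /=; nra.
have [from_q|from_d] := leP need q.
  exists (d, q - need); first by split => /=; try (apply/andP; split); lra.
  by split; [apply/andP; split|]; rewrite /=; nra.
exists (d + (need - q), 0); first by split => /=; try (apply/andP; split); lra.
by split; [apply/andP; split|]; rewrite /=; nra.
Qed.

End Shave.

Section Battery.
Variables (R : realType) (T : nat) (D lam : 'I_T -> R) (c P Emin Emax eta e1 : R).
Hypotheses (lam_ge0 : forall t, 0 <= lam t) (c_ge0 : 0 <= c).
Hypotheses (eta_gt0 : 0 < eta) (eta_le1 : eta <= 1).

Local Notation feas := (feasible D P Emin Emax eta e1).
Local Notation adm := (admissible P).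
Local Notation drop := (wdiff eta^-1 eta).

(* [socs e n] is e_(n+1) in the paper's numbering, with [socs e 0] = e_1; it
   unfolds exactly like [prev_soc]. *)
Definition socs (e : 'I_T -> R) (n : nat) : R :=
  match n with
  | 0 => e1
  | k.+1 => match @insub nat (fun n => n < T)%N 'I_T k with Some t => e t | None => e1 end
  end.

Definition of_socs (g : nat -> R) : 'I_T -> R := fun t => g t.+1.

Lemma socs_succ e (t : 'I_T) : socs e t.+1 = e t.
Proof. by rewrite /= valK. Qed.

Lemma socs_of_socs g n : g 0%N = e1 -> (n <= T)%N -> socs (of_socs g) n = g n.
Proof. by move=> g0; case: n => [|k] lt_kT //=; rewrite (insubT (fun n => n < T)%N lt_kT). Qed.

Definition step_ok p (g : nat -> R) (t : 'I_T) (u : R * R) :=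
  [/\ adm (D t) p u, g t - g t.+1 = drop u & Emin <= g t.+1 <= Emax].

Lemma feasible_step p d q e t : feas p d q e -> step_ok p (socs e) t (d t, q t).
Proof.
move=> /(_ t) [peak dyn d_rng q_rng soc]; rewrite /step_ok socs_succ.
split => //; rewrite /wdiff /=.
have -> : socs e t = prev_soc e1 e t by [].
lra.
Qed.

Lemma feasible_of_socs p g u : g 0%N = e1 -> (forall t, step_ok p g t (u t)) ->
  feas p (fun t => (u t).1) (fun t => (u t).2) (of_socs g).
Proof.
move=> g0 ok t; have [[d_rng q_rng peak] dyn soc] := ok t.
have -> : prev_soc e1 (of_socs g) t = g t by exact: socs_of_socs g0 (ltnW (ltn_ord t)).
by split => //; rewrite /of_socs; move: dyn; rewrite /wdiff; lra.
Qed.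

Lemma feasible_min p d q e d' q' e' : feas p d q e -> feas p d' q' e' ->
  exists d'' q'', feas p d'' q'' (of_socs (fun n => Num.min (socs e n) (socs e' n))).
Proof.
move=> F F'; set g := fun n => Num.min _ _.
have /fin_all_exists[u ok] : forall t, exists u, step_ok p g t u.
  move=> t; have [adm1 drop1 /andP[lo1 hi1]] := feasible_step t F.
  have [adm2 drop2 /andP[lo2 hi2]] := feasible_step t F'.
  have between : Num.min (drop (d t, q t)) (drop (d' t, q' t)) <= g t - g t.+1
      <= Num.max (drop (d t, q t)) (drop (d' t, q' t)).
    by rewrite -drop1 -drop2; exact: subr_min_between.
  have [u adm_u drop_u] := admissible_between adm1 adm2 between.
  by exists u; split; rewrite // le_min ge_min lo1 lo2 hi1.
exists (fun t => (u t).1), (fun t => (u t).2).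
by apply: feasible_of_socs; rewrite // /g /= minxx.
Qed.

Definition partial (w : 'I_T -> R) (n : nat) := \sum_(t < T | (t < n)%N) w t.

Lemma partial0 w : partial w 0 = 0.
Proof. by rewrite /partial big_pred0. Qed.

Lemma partialS w (t : 'I_T) : partial w t.+1 = partial w t + w t.
Proof.
rewrite /partial (bigD1 t) //= addrC; congr (_ + _); apply: eq_bigl => i.
by rewrite ltnS ltn_neqAle andbC.
Qed.

Lemma partial_le_sum w n : (forall t, 0 <= w t) -> partial w n <= \sum_t w t.
Proof.
move=> w_ge0; rewrite /partial [leRHS](bigID (fun t : 'I_T => (t < n)%N)) /= lerDl.
by apply: sumr_ge0 => t _.
Qed.

Lemma partial_ge0 w n : (forall t, 0 <= w t) -> 0 <= partial w n.
Proof. by move=> w_ge0; apply: sumr_ge0 => t _. Qed.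

(* Each step of the clamped trajectory lies between a step of [e0] and one of
   [f], hence is admissible by convexity, and it is within [s] of the step of
   [f], so it can be re-selected close to [u]. *)
Lemma repair_schedule p0 d0 q0 e0 (u : 'I_T -> R * R) (f : nat -> R) s :
  feas p0 d0 q0 e0 -> f 0%N = e1 -> 0 <= s ->
  (forall t, [/\ adm (D t) p0 (u t), f t - f t.+1 = drop (u t),
                Emin <= f t.+1 + s & f t.+1 <= Emax]) ->
  exists u' : 'I_T -> R * R,
    feas p0 (fun t => (u' t).1) (fun t => (u' t).2)
      (of_socs (fun n => clamp (socs e0 n) (f n) s)) /\
    forall t, l1dist (u' t) (u t) <= lip eta^-1 eta * s.
Proof.
move=> F0 f0 s0 ok; set g := fun n => clamp _ _ _.
have /fin_all_exists[u' ok'] :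
    forall t, exists v, step_ok p0 g t v /\ l1dist v (u t) <= lip eta^-1 eta * s.
  move=> t; have [adm0 drop0 /andP[lo0 hi0]] := feasible_step t F0.
  have [adm_u drop_u lo_f hi_f] := ok t.
  have between : Num.min (drop (d0 t, q0 t)) (drop (u t)) <= g t - g t.+1
      <= Num.max (drop (d0 t, q0 t)) (drop (u t)).
    by rewrite -drop0 -drop_u; exact: clamp_sub_between.
  have [v adm_v drop_v] := admissible_between adm0 adm_u between.
  have [w adm_w [drop_w dist_w]] :=
    admissible_reselect eta_gt0 (eta_le_inv eta_gt0 eta_le1) adm_u adm_v.
  exists w; split.
    by split; rewrite // ?drop_w // clamp_lb ?clamp_ub.
  apply: (le_trans dist_w); rewrite ler_wpM2l ?lip_ge0 ?eta_le_inv // drop_v -drop_u.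
  exact: clamp_sub_near.
exists u'; split; last by move=> t; case: (ok' t).
by apply: feasible_of_socs => [|t]; [rewrite /g f0 clampxx | case: (ok' t)].
Qed.

Definition soc_lip := T%:R * (T%:R / eta).

Definition cost_lip :=
  T%:R * c + (T%:R * c + \sum_t lam t) * (lip eta^-1 eta * (T%:R / eta)).

Lemma stage2_obj_le d q (u : 'I_T -> R * R) x y :
  (forall t, cost c (lam t) (u t) <= cost c (lam t) (d t, q t) + (c * x + (c + lam t) * y)) ->
  stage2_obj lam c (fun t => (u t).1) (fun t => (u t).2) <=
    stage2_obj lam c d q + (T%:R * (c * x) + (T%:R * c + \sum_t lam t) * y).
Proof.
move=> bound; apply: le_trans (ler_sum _ (fun t _ => bound t)) _.
rewrite [leLHS]big_split [leLHS]/=.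
have -> : \sum_t (c * x + (c + lam t) * y) = T%:R * (c * x) + (T%:R * c + \sum_t lam t) * y.
  rewrite big_split /= sumr_const card_ord -mulr_suml big_split /= sumr_const card_ord.
  by rewrite !mulr_natl.
by [].
Qed.

Lemma shave_trajectory p p0 d q e d0 q0 e0 :
  p0 <= p -> feas p d q e -> feas p0 d0 q0 e0 ->
  exists (u : 'I_T -> R * R) (f : nat -> R) s,
    [/\ f 0%N = e1, 0 <= s <= T%:R * ((p - p0) / eta), forall t : 'I_T, f t.+1 <= e t,
       forall t, [/\ adm (D t) p0 (u t), f t - f t.+1 = drop (u t),
                     Emin <= f t.+1 + s & f t.+1 <= Emax]
     & forall t, cost c (lam t) (u t) <= cost c (lam t) (d t, q t) + c * (p - p0)].
Proof.
move=> pp0 F F0.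
have /fin_all_exists2[u adm_u shaved] : forall t, exists2 v, adm (D t) p0 v &
    drop (d t, q t) <= drop v <= drop (d t, q t) + (p - p0) / eta /\
    cost c (lam t) v <= cost c (lam t) (d t, q t) + c * (p - p0).
  move=> t; have [[/andP[_ d0P] /andP[q00 _] peak0] _ _] := feasible_step t F0.
  apply: shave_step => //; last by case: (feasible_step t F).
  by move: d0P q00 peak0 => /=; lra.
pose extra t := drop (u t) - drop (d t, q t).
have extra_ge0 t : 0 <= extra t by case: (shaved t) => /andP[lo _] _; rewrite subr_ge0.
have extra_le t : extra t <= (p - p0) / eta.
  by case: (shaved t) => /andP[_ hi] _; rewrite lerBlDl.
pose s := \sum_t extra t.
pose f n := socs e n - partial extra n.
exists u, f, s; split => [||t|t|t]; last by case: (shaved t).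
- by rewrite /f partial0 subr0.
- rewrite sumr_ge0 //=; apply: le_trans (ler_sum _ (fun t _ => extra_le t)) _.
  by rewrite sumr_const card_ord mulr_natl.
- by rewrite /f socs_succ gerBl partial_ge0.
have [_ drop_e /andP[lo hi]] := feasible_step t F.
have part_le : partial extra t.+1 <= s := partial_le_sum t.+1 extra_ge0.
have part_ge0 := partial_ge0 t.+1 extra_ge0.
by split; [exact: adm_u | rewrite /f partialS /extra -drop_e; ring | rewrite /f; lra ..].
Qed.

Lemma lower_peak p p0 d q e d0 q0 e0 : p0 <= p -> feas p d q e -> feas p0 d0 q0 e0 ->
  exists d' q' e', [/\ feas p0 d' q' e',
    \sum_t e' t <= \sum_t e t + soc_lip * (p - p0) &
    stage2_obj lam c d' q' <= stage2_obj lam c d q + cost_lip * (p - p0)].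
Proof.
move=> pp0 F F0.
have [u1 [f [s [f0 /andP[s_ge0 s_le] f_le f_ok cost1]]]] := shave_trajectory pp0 F F0.
have [u3 [F3 dist3]] := repair_schedule F0 f0 s_ge0 f_ok.
set g := fun n => clamp (socs e0 n) (f n) s.
exists (fun t => (u3 t).1), (fun t => (u3 t).2), (of_socs g).
have T_ge0 : 0 <= T%:R :> R := ler0n _ T.
split => //.
  have soc_le t : of_socs g t <= e t + s.
    by have := clamp_le (socs e0 t.+1) (f t.+1) s_ge0; have := f_le t; rewrite /of_socs /g; lra.
  apply: le_trans (ler_sum _ (fun t _ => soc_le t)) _.
  rewrite big_split /= sumr_const card_ord -mulr_natl /soc_lip.
  by have := ler_wpM2l T_ge0 s_le; lra.
pose L := lip eta^-1 eta.
have L_ge0 : 0 <= L by rewrite lip_ge0 ?eta_le_inv.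
have bound t : cost c (lam t) (u3 t) <=
    cost c (lam t) (d t, q t) + (c * (p - p0) + (c + lam t) * (L * s)).
  have := cost_lipschitz (u3 t) (u1 t) c_ge0 (lam_ge0 t); have := cost1 t.
  have : (c + lam t) * l1dist (u3 t) (u1 t) <= (c + lam t) * (L * s).
    by rewrite ler_wpM2l ?addr_ge0.
  lra.
apply: le_trans (stage2_obj_le bound) _.
have K_ge0 : 0 <= (T%:R * c + \sum_t lam t) * L.
  by rewrite mulr_ge0 // addr_ge0 ?mulr_ge0 // sumr_ge0.
by have := ler_wpM2l K_ge0 s_le; rewrite /cost_lip -/L; lra.
Qed.

Lemma combined_objE kappa p d q : combined_obj D lam c kappa p d q =
  \sum_t lam t * D t + kappa * p + stage2_obj lam c d q.
Proof.
rewrite /combined_obj /stage2_obj [RHS]addrAC -big_split /=; congr (_ + _).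
by apply: eq_bigr => t _; ring.
Qed.

Lemma stage1_peak_min delta ps ds qs es p d q e : 0 < delta -> delta * soc_lip < 1 ->
  stage1_opt D P Emin Emax eta e1 delta ps ds qs es -> feas p d q e -> ps <= p.
Proof.
move=> delta_gt0 delta_small [Fs opt] F; rewrite leNgt; apply/negP => p_lt.
have [d' [q' [e' [F' soc' _]]]] := lower_peak (ltW p_lt) Fs F.
have := ler_wpM2l (ltW delta_gt0) soc'; have := opt _ _ _ _ F'.
rewrite /stage1_obj; nra.
Qed.

Lemma stage1_soc_min delta ps ds qs es d q e : 0 < delta ->
  stage1_opt D P Emin Emax eta e1 delta ps ds qs es -> feas ps d q e -> forall t, es t <= e t.
Proof.
move=> delta_gt0 [Fs opt] F t.
have [d' [q' Fm]] := feasible_min Fs F.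
have := opt _ _ _ _ Fm; rewrite /stage1_obj lerD2l ler_pM2l //.
set m := of_socs _ => sum_le.
have m_le t' : m t' <= es t' by rewrite /m /of_socs !socs_succ ge_min lexx.
have gap_ge0 t' : true -> 0 <= es t' - m t' by rewrite subr_ge0.
have gap0 : \sum_t' (es t' - m t') = 0.
  by apply/eqP; rewrite eq_le sumr_ge0 // andbT sumrB subr_le0.
have : es t - m t = 0 := psumr_eq0P gap_ge0 gap0 isT.
move/eqP; rewrite subr_eq0 => /eqP ->.
by rewrite /m /of_socs !socs_succ ge_min lexx orbT.
Qed.

Lemma combined_opt_peak kappa ps ds qs es p d q e : cost_lip < kappa ->
  (forall p' d' q' e', feas p' d' q' e' -> ps <= p') -> feas ps ds qs es ->
  combined_opt D lam c P Emin Emax eta e1 kappa p d q e -> p = ps.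
Proof.
move=> kappa_big min_ps Fs [F opt]; apply/eqP; rewrite eq_le (min_ps _ _ _ _ F) andbT leNgt.
apply/negP => ps_lt.
have [d' [q' [e' [F' _ cost']]]] := lower_peak (ltW ps_lt) F Fs.
have := opt _ _ _ _ F'; rewrite !combined_objE; nra.
Qed.

Lemma stage2_opt_combined kappa ps es d q e : cost_lip <= kappa ->
  (forall p' d' q' e', feas p' d' q' e' -> ps <= p') ->
  (forall d' q' e', feas ps d' q' e' -> forall t, es t <= e' t) ->
  stage2_opt D lam c P Emin Emax eta e1 ps es d q e ->
  combined_opt D lam c P Emin Emax eta e1 kappa ps d q e.
Proof.
move=> kappa_big min_ps min_es [[F _] opt]; split => // p' d' q' e' F'.
have ps_le := min_ps _ _ _ _ F'.
have [d'' [q'' [e'' [F'' _ cost'']]]] := lower_peak ps_le F' F.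
have := opt _ _ _ (conj F'' (min_es _ _ _ F'')); rewrite !combined_objE; nra.
Qed.

End Battery.

Theorem proposition1 (R : realType) (T : nat) (D lam : 'I_T -> R)
  (c Pbar Emin Emax eta e1 : R) :
  (forall t : 'I_T, 0 <= lam t) -> 0 <= c -> 0 < Pbar ->
  0 <= Emin -> Emin <= Emax -> 0 < eta -> eta <= 1 ->
  Emin <= e1 -> e1 <= Emax ->
  (exists p d q e, feasible D Pbar Emin Emax eta e1 p d q e) ->
  exists delta0 : R, 0 < delta0 /\
  exists K : R,
  forall delta kappa : R, 0 < delta -> delta < delta0 ->
  0 < kappa -> K < kappa ->
  forall (ps : R) (ds qs es : 'I_T -> R),
    stage1_opt D Pbar Emin Emax eta e1 delta ps ds qs es ->
    (forall p d q e,
        combined_opt D lam c Pbar Emin Emax eta e1 kappa p d q e -> p = ps) /\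
    (forall d q e,
        stage2_opt D lam c Pbar Emin Emax eta e1 ps es d q e ->
        combined_opt D lam c Pbar Emin Emax eta e1 kappa ps d q e /\
        combined_obj D lam c kappa ps d q
          = \sum_(t < T) lam t * D t + kappa * ps + stage2_obj lam c d q).
Proof.
move=> lam_ge0 c_ge0 _ _ _ eta_gt0 eta_le1 _ _ _.
have soc_lip_ge0 : 0 <= soc_lip T eta by rewrite /soc_lip !mulr_ge0 ?ler0n ?invr_ge0 ?ltW.
exists (soc_lip T eta + 1)^-1; split; first by rewrite invr_gt0; lra.
exists (cost_lip lam c eta) => delta kappa delta_gt0 delta_lt _ kappa_big ps ds qs es opt1.
have delta_small : delta * soc_lip T eta < 1.
  have inv : (soc_lip T eta + 1) * (soc_lip T eta + 1)^-1 = 1.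
    by rewrite mulfV // gt_eqF //; lra.
  nra.
have min_ps := stage1_peak_min lam_ge0 c_ge0 eta_gt0 eta_le1 delta_gt0 delta_small opt1.
have min_es := stage1_soc_min delta_gt0 opt1.
split => [p d q e optc|d q e opt2].
  exact: (combined_opt_peak lam_ge0 c_ge0 eta_gt0 eta_le1 kappa_big min_ps (proj1 opt1) optc).
split; last exact: combined_objE.
exact: (stage2_opt_combined lam_ge0 c_ge0 eta_gt0 eta_le1 (ltW kappa_big) min_ps min_es opt2).
Qed.
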